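(* Let $B \in M_{n_1}\otimes\cdots\otimes M_{n_p}$ (real) and let $P \subseteq \mathcal{P}([p])$ be non-empty. Then \[ \mu_{\min}(B) \ge W^{P,\mathbf{1}}_{\min}(B) \quad\text{and}\quad \mu_{\max}(B) \le W^{P,\mathbf{1}}_{\max}(B). \]
   Context: $M_n$ denotes real $n\times n$ matrices; $M_{n_1}\otimes\cdots\otimes M_{n_p}$ is identified with $M_{n_1\cdots n_p}$ via the Kronecker product. $[p] = \{1,\dots,p\}$ and $\mathcal{P}([p])$ is its power set. For $B = \sum_\ell X_{1,\ell}\otimes\cdots\otimes X_{p,\ell}$, the $j$-th partial transpose $\Gamma_j(B)$ replaces each $X_{j,\ell}$ by $X_{j,\ell}^T$ (a well-defined linear map); for $S\subseteq[p]$, $\Gamma_S$ is the composition of $\Gamma_j$ over $j\in S$ ($\Gamma_\emptyset$ is the identity). $\mu_{\min}(B)$ (resp. $\mu_{\max}(B)$) is the minimum (resp. maximum) of $(\mathbf{v_1}\otimes\cdots\otimes\mathbf{v_p})^T B(\mathbf{v_1}\otimes\cdots\otimes\mathbf{v_p})$ over unit vectors $\mathbf{v_j}\in\mathbb{R}^{n_j}$. The joint numerical range of $A_1,\dots,A_k\in M_N$ is $W(A_1,\dots,A_k) = \{(\mathbf{x}^*A_1\mathbf{x},\dots,\mathbf{x}^*A_k\mathbf{x}) : \mathbf{x}\in\mathbb{C}^N,\|\mathbf{x}\|=1\}$. For $P = \{S_1,\dots,S_k\}$, $W^{P,\mathbf{1}}(B) = \{c\in\mathbb{R} : (c,\dots,c)\in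 W(\Gamma_{S_1}(B),\dots,\Gamma_{S_k}(B))\}$, a nonempty compact set with minimum $W^{P,\mathbf{1}}_{\min}(B)$ and maximum $W^{P,\mathbf{1}}_{\max}(B)$. *)

From HB Require Import structures.
From mathcomp Require Import all_boot all_order all_algebra.
From mathcomp Require Import complex.
From mathcomp Require Import classical_sets boolp reals.
Set Implicit Arguments. Unset Strict Implicit. Unset Printing Implicit Defensive.
Import Order.TTheory GRing.Theory Num.Theory.
Local Open Scope ring_scope.

(* The space
   M_{n_1} (x) ... (x) M_{n_p} = M_{n_1...n_p} is represented by matrices whose
   rows and columns are indexed by multi-indices: the Kronecker product
   X_1 (x) ... (x) X_p has entry  prod_j X_j (i_j) (k_j)  at ((i_j)_j, (k_j)_j). *)
Definition Idx (p : nat) (n : 'I_p -> nat) := {dffun forall j : 'I_p, 'I_(n j)}.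

Definition tmat (R : Type) (p : nat) (n : 'I_p -> nat) := Idx n -> Idx n -> R.

Definition ptrans (R : Type) (p : nat) (n : 'I_p -> nat) (S : {set 'I_p})
  (B : tmat R n) : tmat R n :=
  fun i k => B [ffun j => if j \in S then k j else i j]
               [ffun j => if j \in S then i j else k j].

Definition tprod (R : pzRingType) (p : nat) (n : 'I_p -> nat)
  (v : forall j : 'I_p, 'I_(n j) -> R) : Idx n -> R :=
  fun i => \prod_(j : 'I_p) v j (i j).

Definition rquad (R : pzRingType) (p : nat) (n : 'I_p -> nat)
  (B : tmat R n) (w : Idx n -> R) : R :=
  \sum_(i : Idx n) \sum_(k : Idx n) w i * B i k * w k.

Definition cquad (R : rcfType) (p : nat) (n : 'I_p -> nat)
  (A : tmat R n) (x : Idx n -> R[i]) : R[i] :=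
  \sum_(i : Idx n) \sum_(k : Idx n) conjc (x i) * ((A i k)%:C)%C * x k.

Definition runit (R : pzRingType) (m : nat) (v : 'I_m -> R) : Prop :=
  \sum_(a : 'I_m) v a ^+ 2 = 1.
Definition cunit (R : rcfType) (p : nat) (n : 'I_p -> nat)
  (x : Idx n -> R[i]) : Prop :=
  \sum_(i : Idx n) conjc (x i) * x i = 1.

Definition prodvals (R : rcfType) (p : nat) (n : 'I_p -> nat) (B : tmat R n)
  : set R :=
  [set c | exists v : forall j : 'I_p, 'I_(n j) -> R,
             (forall j, runit (v j)) /\ c = rquad B (tprod v)].

(* W^{P,1}(B) = { c real : (c,...,c) in W(Gamma_{S_1}(B),...,Gamma_{S_k}(B)) }. *)
Definition WP1 (R : rcfType) (p : nat) (n : 'I_p -> nat)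
  (P : {set {set 'I_p}}) (B : tmat R n) : set R :=
  [set c | exists x : Idx n -> R[i],
             cunit x /\ forall S, S \in P -> cquad (ptrans S B) x = (c%:C)%C].

Definition mu_min (R : realType) p (n : 'I_p -> nat) (B : tmat R n) : R :=
  inf (prodvals B).
Definition mu_max (R : realType) p (n : 'I_p -> nat) (B : tmat R n) : R :=
  sup (prodvals B).
Definition WP1_min (R : realType) p (n : 'I_p -> nat) (P : {set {set 'I_p}})
  (B : tmat R n) : R := inf (WP1 P B).
Definition WP1_max (R : realType) p (n : 'I_p -> nat) (P : {set {set 'I_p}})
  (B : tmat R n) : R := sup (WP1 P B).

(** Partial transposes do not change the expectation of a product vector
    v_1 (x) ... (x) v_p: transposing the factors in S only permutes the pairs of
    multi-indices (i, k), and the coefficient of B_{ik} in the real form is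
    prod_j v_j(i_j) v_j(k_j), which is invariant under exchanging i_j and k_j.
    Hence the expectation of a unit product vector lies in W^{P,1}(B) for
    every P.  For non-empty P, W^{P,1}(B) is bounded (by the
    l^1 norm of any Gamma_S(B), S in P), so its infimum and supremum bound those
    of the set of product expectations. *)
From HB Require Import structures.
From mathcomp Require Import all_boot all_order all_algebra.
From mathcomp Require Import complex.
From mathcomp Require Import classical_sets boolp reals.
From mathcomp Require Import ring lra.
Set Implicit Arguments. Unset Strict Implicit. Unset Printing Implicit Defensive.
Import Order.TTheory GRing.Theory Num.Theory.
Local Open Scope ring_scope.

Section ProductSums.
Variables (R : comPzRingType) (p : nat) (n : 'I_p -> nat).
Local Notation T := {j : 'I_p & 'I_(n j)}.

Lemma sum_tagged (F : forall j, 'I_(n j) -> R) j :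
  \sum_(t : T | tag t == j) F (tag t) (tagged t) = \sum_(a : 'I_(n j)) F j a.
Proof.
rewrite (eq_bigl (fun t => t \in @tagged_with _ (fun j => 'I_(n j)) j)) //.
rewrite big_sub /= (reindex (tag_with j)) //=.
by exists (untag_with j) => x _; [apply: tag_withK | apply: untag_withK].
Qed.

Lemma sum_tprod (F : forall j, 'I_(n j) -> R) :
  \sum_(i : Idx n) \prod_j F j (i j) = \prod_j \sum_(a : 'I_(n j)) F j a.
Proof.
under eq_bigr => j _ do rewrite -(sum_tagged F j).
rewrite (bigA_distr_big_dep (fun j (t : T) => tag t == j)
   (fun (_ : 'I_p) (t : T) => F (tag t) (tagged t))).
rewrite (big_sub (family (@tagged_with _ (fun j => 'I_(n j))))) /=.
rewrite (reindex (fun i : Idx n => to_family_tagged_with (fprod_of_dffun i))) /=.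
  by apply: eq_bigr => i _; apply: eq_bigr => j _; rewrite ffunE.
exists (fun x => dffun_of_fprod (of_family_tagged_with x)) => x _.
  by rewrite to_family_tagged_withK fprod_of_dffunK.
by rewrite dffun_of_fprodK of_family_tagged_withK.
Qed.

Lemma sum_tprod_sqr (v : forall j, 'I_(n j) -> R) :
  (forall j, runit (v j)) -> \sum_(i : Idx n) tprod v i * tprod v i = 1.
Proof.
move=> hv; under eq_bigr => i _ do rewrite /tprod -big_split /=.
rewrite (sum_tprod (fun j a => v j a * v j a)); apply: big1 => j _.
by rewrite -(hv j); apply: eq_bigr => a _; rewrite expr2.
Qed.

Definition mix (S : {set 'I_p}) (i k : Idx n) : Idx n :=
  [ffun j => if j \in S then k j else i j].

Lemma mixK S i k : mix S (mix S i k) (mix S k i) = i.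
Proof. by apply/ffunP => j; rewrite !ffunE; case: (j \in S). Qed.

Lemma tprod_mix (v : forall j, 'I_(n j) -> R) S i k :
  tprod v (mix S i k) * tprod v (mix S k i) = tprod v i * tprod v k.
Proof.
rewrite /tprod -!big_split /=; apply: eq_bigr => j _.
by rewrite !ffunE; case: (j \in S) => //; rewrite mulrC.
Qed.

Lemma rquad_ptrans_tprod (v : forall j, 'I_(n j) -> R) S (B : tmat R n) :
  rquad (ptrans S B) (tprod v) = rquad B (tprod v).
Proof.
rewrite /rquad !pair_bigA /=.
pose h (ik : Idx n * Idx n) := (mix S ik.1 ik.2, mix S ik.2 ik.1).
have hK : involutive h by case=> i k; rewrite /h /= !mixK.
rewrite (reindex_inj (inv_inj hK)) /=; apply: eq_bigr => -[i k] _ /=.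
rewrite /ptrans -/(mix S _ _) -/(mix S _ _) !mixK.
by rewrite mulrAC [in RHS]mulrAC tprod_mix.
Qed.

End ProductSums.

Local Open Scope complex_scope.

Section ComplexForms.
Variables (R : rcfType) (p : nat) (n : 'I_p -> nat).

Lemma cquad_real (A : tmat R n) (w : Idx n -> R) :
  cquad A (fun i => (w i)%:C) = (rquad A w)%:C.
Proof.
rewrite /cquad /rquad rmorph_sum; apply: eq_bigr => i _.
rewrite rmorph_sum; apply: eq_bigr => k _.
by rewrite conjc_real !rmorphM.
Qed.

Lemma cunit_real (w : Idx n -> R) :
  \sum_i w i * w i = 1 -> cunit (fun i => (w i)%:C).
Proof.
move=> w1; rewrite /cunit.
under eq_bigr => i _ do rewrite conjc_real -rmorphM.
by rewrite -rmorph_sum w1.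
Qed.

Lemma Re_conjc_mul_real (x y : R[i]) (r : R) :
  complex.Re (x^* * r%:C * y) =
  r * (complex.Re x * complex.Re y + complex.Im x * complex.Im y).
Proof. by case: x y => a b [c d] /=; ring. Qed.

Lemma Re_conjc_mul (x : R[i]) :
  complex.Re (x^* * x) = complex.Re x ^+ 2 + complex.Im x ^+ 2.
Proof. by case: x => a b /=; ring. Qed.

Lemma cunit_coord_le1 (x : Idx n -> R[i]) :
  cunit x -> forall i, complex.Re (x i) ^+ 2 + complex.Im (x i) ^+ 2 <= 1.
Proof.
move=> /(congr1 (@complex.Re R)); rewrite raddf_sum /= => xu i; rewrite -xu.
rewrite (bigD1 i) //= Re_conjc_mul lerDl; apply: sumr_ge0 => k _.
by rewrite Re_conjc_mul addr_ge0 // sqr_ge0.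
Qed.

Lemma norm_Re_cquad_le (A : tmat R n) (x : Idx n -> R[i]) :
  cunit x ->
  `|complex.Re (cquad A x)| <= \sum_(i : Idx n) \sum_(k : Idx n) `|A i k|.
Proof.
move=> xu; rewrite /cquad raddf_sum; apply: le_trans (ler_norm_sum _ _ _) _.
apply: ler_sum => i _; rewrite raddf_sum.
apply: le_trans (ler_norm_sum _ _ _) _; apply: ler_sum => k _.
rewrite /= Re_conjc_mul_real normrM; apply: ler_piMr => //.
have := cunit_coord_le1 xu i; have := cunit_coord_le1 xu k.
set a := complex.Re (x i); set b := complex.Im (x i).
set c := complex.Re (x k); set d := complex.Im (x k) => hk hi.
(* 2 |a c + b d| <= a^2 + b^2 + c^2 + d^2 <= 2 *)
have := sqr_ge0 (a + c); have := sqr_ge0 (b + d).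
have := sqr_ge0 (a - c); have := sqr_ge0 (b - d).
by rewrite ler_norml; move=> *; apply/andP; split; nra.
Qed.

End ComplexForms.

Section ProductValues.
Variables (R : realType) (p : nat) (n : 'I_p -> nat) (B : tmat R n).

Lemma prodvals_sub_WP1 (P : {set {set 'I_p}}) : (prodvals B `<=` WP1 P B)%classic.
Proof.
move=> c [v [hv ->]]; exists (fun i => (tprod v i)%:C); split.
  exact/cunit_real/sum_tprod_sqr.
by move=> S _; rewrite cquad_real rquad_ptrans_tprod.
Qed.

Lemma WP1_norm_le (P : {set {set 'I_p}}) S c : S \in P -> WP1 P B c ->
  `|c| <= \sum_(i : Idx n) \sum_(k : Idx n) `|ptrans S B i k|.
Proof.
move=> SP [x [xu /(_ S SP) e]].
by have := norm_Re_cquad_le (ptrans S B) xu; rewrite e.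
Qed.

Lemma prodvals_neq0 : (forall j, (0 < n j)%N) -> (prodvals B !=set0)%classic.
Proof.
move=> hn; pose v j (a : 'I_(n j)) : R := (a == Ordinal (hn j))%:R.
exists (rquad B (tprod v)); exists v; split => // j.
rewrite /runit (bigD1 (Ordinal (hn j))) //= /v eqxx big1 ?addr0 ?expr1n //.
by move=> a /negbTE ->; rewrite expr0n.
Qed.

End ProductValues.

Theorem theorem6p1 (R : realType) (p : nat) (n : 'I_p -> nat)
  (hn : forall j, (0 < n j)%N) (B : tmat R n) (P : {set {set 'I_p}})
  (hP : P != finset.set0) :
  WP1_min P B <= mu_min B /\ mu_max B <= WP1_max P B.
Proof.
have [S SP] := set0Pn _ hP.
pose M := \sum_(i : Idx n) \sum_(k : Idx n) `|ptrans S B i k|.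
have bnd c : WP1 P B c -> - M <= c <= M.
  by move=> /(WP1_norm_le SP); rewrite ler_norml.
have hlb : has_lbound (WP1 P B) by exists (- M) => c /bnd /andP[].
have hub : has_ubound (WP1 P B) by exists M => c /bnd /andP[].
have sub := @prodvals_sub_WP1 _ _ _ B P.
have ne := prodvals_neq0 B hn.
split.
  by apply: lb_le_inf => // c /sub; apply: ge_inf.
by apply: ge_sup => // c /sub; move/ubP: (ub_le_sup hub); apply.
Qed.
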